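(* Let $\mathcal{G}=(\mathcal{V},\mathcal{E})$ be a simple undirected graph. For any pair of nodes $i,j\in\mathcal{V}$ at distance $T\ge 1$, $$\bigl(\tilde{C}^{\top}\widehat{B}^{\,T-1}\tilde{C}\bigr)_{j,i}\ \ge\ \bigl(\widehat{A}^{T}\bigr)_{j,i}.$$ Moreover, if $\mathcal{G}$ is $d$-regular, then $(\tilde{C}^{\top}\widehat{B}^{\,T-1}\tilde{C})_{j,i}$ decays only like $O(d^{-T})$, whereas $(\widehat{A}^{T})_{j,i}$ decays like $O((d+1)^{-T})$.
   Context: $A$ is the adjacency matrix, $D_A$ the diagonal degree matrix, and $\widehat{A}=(D_A+I)^{-1/2}(A+I)(D_A+I)^{-1/2}$ is the degree-normalized adjacency matrix with self-loops. Each undirected edge gives two directed edges. The non-backtracking matrix $B\in\{0,1\}^{2|\mathcal{E}|\times 2|\mathcal{E}|}$ has $B_{(\ell\to k),(j\to i)}=1$ if $k=j$ and $\ell\ne i$, and $0$ otherwise. $D$ is diagonal with $D_{(j\to i),(j\to i)}=\sum_{\ell\to k}B_{(j\to i),(\ell\to k)}$, and $\widehat{B}=(D+I)^{-1/2}(B+I)(D+I)^{-1/2}$. $C\in\mathbb{R}^{2|\mathcal{E}|\times|\mathcal{V}|}$ has $C_{(k\to j),i}=1$ if $j=i$ or $k=i$ and $0$ otherwise, and $\tilde{C}_{(k\to j),i}=C_{(k\to j),i}+C_{(j\to k),i}$. *)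

From HB Require Import structures.
From mathcomp Require Import all_boot all_order all_algebra.
Set Implicit Arguments. Unset Strict Implicit. Unset Printing Implicit Defensive.
Import Order.TTheory GRing.Theory Num.Theory.
Local Open Scope ring_scope.

Definition simple_graph (n : nat) (adj : rel 'I_n) : Prop :=
  (forall u v, adj u v = adj v u) /\ (forall u, ~~ adj u u).

Fixpoint walk_exists (n : nat) (adj : rel 'I_n) (k : nat) (u v : 'I_n) : bool :=
  match k with
  | 0 => u == v
  | k'.+1 => [exists w, adj u w && walk_exists adj k' w v]
  end.

Definition at_distance (n : nat) (adj : rel 'I_n) (u v : 'I_n) (T : nat) : Prop :=
  walk_exists adj T u v /\ (forall k, (k < T)%N -> ~~ walk_exists adj k u v).

Definition degree (n : nat) (adj : rel 'I_n) (v : 'I_n) : nat := #|[set w | adj v w]|.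

Definition regular (n : nat) (adj : rel 'I_n) (d : nat) : Prop :=
  forall v, degree adj v = d.

Section Matrices.
Variables (R : rcfType) (n : nat) (adj : rel 'I_n).

(* directed edges (k -> j), stored as the pair (k, j); each undirected edge
   {k, j} yields the two directed edges (k,j) and (j,k) *)
Definition dedge := {p : 'I_n * 'I_n | adj p.1 p.2}.
Definition nE : nat := #|{: dedge}|.
Definition edge_of (e : 'I_nE) : 'I_n * 'I_n := val (@enum_val dedge _ e).

Definition diag_invsqrt (m : nat) (x : 'I_m -> R) : 'M[R]_m :=
  diag_mx (\row_i (Num.sqrt (x i))^-1).

Definition adjmx : 'M[R]_n := \matrix_(a, b) (adj a b)%:R.
Definition degmx : 'M[R]_n := diag_mx (\row_a (degree adj a)%:R).
Definition Ahat : 'M[R]_n :=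
  let S := diag_invsqrt (fun a => degmx a a + 1) in
  S *m (adjmx + 1%:M) *m S.

Definition NBmx : 'M[R]_nE :=
  \matrix_(e, f) (((edge_of e).2 == (edge_of f).1) &&
                   ((edge_of e).1 != (edge_of f).2))%:R.
Definition NBdeg (e : 'I_nE) : R := \sum_f NBmx e f.
Definition Bhat : 'M[R]_nE :=
  let S := diag_invsqrt (fun e => NBdeg e + 1) in
  S *m (NBmx + 1%:M) *m S.

Definition Cpair (p : 'I_n * 'I_n) (i : 'I_n) : R := ((p.2 == i) || (p.1 == i))%:R.
Definition Cmx : 'M[R]_(nE, n) := \matrix_(e, i) Cpair (edge_of e) i.
Definition Ctilde : 'M[R]_(nE, n) :=
  \matrix_(e, i) (Cpair (edge_of e) i + Cpair ((edge_of e).2, (edge_of e).1) i).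

End Matrices.

(* If the distance from j to i is T, every walk of length T from j to i, even
   with a loop allowed at every vertex, is a geodesic: it never stays put and
   never steps back.  So only geodesics survive in ((A + I)^T)_ji, and a geodesic
   j = x0 ~ x1 ~ ... ~ xT = i is the same thing as a walk (x0->x1), ...,
   (x(T-1)->xT) of length T - 1 of B + I leaving j and entering i.  Writing
   C~ = 2 (tail + head) with the tail and head incidence matrices of the directed
   edges, the term tail^T (B + I)^(T-1) head of C~^T (B + I)^(T-1) C~ counts
   exactly these walks, and the other terms are non-negative.  After its first
   step, which weighs at most 1 in A^, a geodesic step u -> v weighs
   ((d_u + 1)(d_v + 1))^(-1/2) in A^ and (d_u d_v)^(-1/2) in B^, whence the
   inequality.  For a d-regular graph B^ = (B + I)/d and A^ = (A + I)/(d + 1),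
   and all the other terms vanish except head^T tail = A when T = 1, which
   doubles the count. *)

From HB Require Import structures.
From mathcomp Require Import all_boot all_order all_algebra.
From mathcomp Require Import ring.
Set Implicit Arguments. Unset Strict Implicit. Unset Printing Implicit Defensive.
Import Order.TTheory GRing.Theory Num.Theory.
Local Open Scope ring_scope.

Section Walks.
Variables (n : nat) (adj : rel 'I_n).
Local Notation walk := (walk_exists adj).

Lemma walk_rcons k u v : walk k.+1 u v = [exists w, walk k u w && adj w v].
Proof.
elim: k u => [|k IH] u /=.
  apply/existsP/existsP => [[w /andP[uw /eqP <-]]|[w /andP[/eqP <- uv]]].
    by exists u; rewrite uw eqxx.
  by exists v; rewrite uv eqxx.
apply/existsP/existsP => [[w /andP[uw wv]]|[y /andP[/existsP[w /andP[uw wy]] yv]]].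
  move: (IH w); rewrite /= wv => /esym/existsP[y /andP[wy yv]].
  by exists y; rewrite yv andbT; apply/existsP; exists w; rewrite uw.
exists w; rewrite uw; have := IH w; rewrite /= => ->.
by apply/existsP; exists y; rewrite wy.
Qed.

Lemma walk_sym : symmetric adj -> forall k, symmetric (walk k).
Proof.
move=> adj_sym; elim=> [|k IH] u v; first by rewrite /= eq_sym.
rewrite walk_rcons /=; apply/existsP/existsP => -[w /andP[h a]];
  by exists w; rewrite IH adj_sym ?a ?h.
Qed.

Definition dist_ge (m : nat) (a b : 'I_n) : Prop :=
  forall k, (k < m)%N -> ~~ walk k a b.

Lemma dist_geW m m' a b : (m' <= m)%N -> dist_ge m a b -> dist_ge m' a b.
Proof. by move=> le_m'm far k lt_km'; apply: far; apply: leq_trans le_m'm. Qed.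

Lemma dist_ge_adj m a b c : adj a b -> dist_ge m.+1 a c -> dist_ge m b c.
Proof.
move=> ab far k lt_km; apply: contraNN (far k.+1 lt_km) => w.
by apply/existsP; exists b; rewrite ab.
Qed.

Lemma dist_ge_neq m a b : dist_ge m.+1 a b -> a != b.
Proof. by move/(_ 0%N isT). Qed.

Lemma dist_ge_nadj m a b : dist_ge m.+2 a b -> ~~ adj a b.
Proof.
move=> far; apply: contraNN (far 1%N isT) => ab.
by apply/existsP; exists b; rewrite ab eqxx.
Qed.

Lemma dist_ge_sym : symmetric adj -> forall m a b, dist_ge m a b -> dist_ge m b a.
Proof. by move=> adj_sym m a b far k /far; rewrite walk_sym. Qed.

Definition local_mx (R : pzRingType) k (p : 'I_k -> 'I_n) (M : 'M[R]_k) : Prop :=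
  forall x y, M x y != 0 -> p x = p y \/ adj (p x) (p y).

Lemma mxpow_local_eq0 (R : pzRingType) k (p : 'I_k -> 'I_n) (M : 'M[R]_k) :
  local_mx p M -> forall m x y, dist_ge m.+1 (p x) (p y) -> (M ^+ m) x y = 0.
Proof.
move=> Mloc; elim=> [|m IH] x y far.
  rewrite expr0 mxE; case: eqP => // exy.
  by move: (dist_ge_neq far); rewrite exy eqxx.
rewrite exprS -mulmxE mxE big1 // => z _.
have [->|/Mloc[pxz|adj_xz]] := eqVneq (M x z) 0; first by rewrite mul0r.
  by rewrite IH ?mulr0 // -pxz; apply: dist_geW far.
by rewrite IH ?mulr0 //; apply: dist_ge_adj adj_xz far.
Qed.

Lemma mxpow_local_step (R : pzRingType) (M : 'M[R]_n) m a v :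
    local_mx id M -> dist_ge m.+1 a v ->
  (M ^+ m.+1) a v = \sum_b (adj a b)%:R * (M a b * (M ^+ m) b v).
Proof.
move=> Mloc far; rewrite exprS -mulmxE mxE; apply: eq_bigr => b _.
have [<-|ab] := eqVneq a b; first by rewrite (mxpow_local_eq0 Mloc) ?mulr0.
case: (boolP (adj a b)) => [_|nab]; first by rewrite mul1r.
rewrite mul0r; have [->|/Mloc /= [eab|adj_ab]] := eqVneq (M a b) 0.
- by rewrite mul0r.
- by rewrite eab eqxx in ab.
- by rewrite adj_ab in nab.
Qed.

End Walks.

Section EntrywiseOrder.
Variable R : numDomainType.

Definition nnegmx p q (M : 'M[R]_(p, q)) : Prop := forall i j, 0 <= M i j.
Definition lemx p q (M N : 'M[R]_(p, q)) : Prop := forall i j, M i j <= N i j.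

Lemma nnegmx_mul p q r (M : 'M[R]_(p, q)) (N : 'M[R]_(q, r)) :
  nnegmx M -> nnegmx N -> nnegmx (M *m N).
Proof. by move=> M0 N0 i j; rewrite mxE sumr_ge0 // => k _; rewrite mulr_ge0. Qed.

Lemma nnegmx_exp k (M : 'M[R]_k) m : nnegmx M -> nnegmx (M ^+ m).
Proof.
move=> M0; elim: m => [|m IH] i j; first by rewrite expr0 mxE ler0n.
by rewrite exprS -mulmxE; apply: nnegmx_mul.
Qed.

Lemma lemx_trmx p q (M N : 'M[R]_(p, q)) : lemx M N -> lemx M^T N^T.
Proof. by move=> MN i j; rewrite !mxE. Qed.

Lemma lemx_mul p q r (M M' : 'M[R]_(p, q)) (N N' : 'M[R]_(q, r)) :
  nnegmx M -> lemx M M' -> nnegmx N -> lemx N N' -> lemx (M *m N) (M' *m N').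
Proof.
move=> M0 MM' N0 NN' i j; rewrite !mxE; apply: ler_sum => k _.
exact: ler_pM.
Qed.

Lemma lemx_exp k (M M' : 'M[R]_k) m :
  nnegmx M -> lemx M M' -> lemx (M ^+ m) (M' ^+ m).
Proof.
move=> M0 MM'; elim: m => [|m IH]; first by move=> i j; rewrite !expr0.
by rewrite !exprS -!mulmxE; apply: lemx_mul => //; apply: nnegmx_exp.
Qed.

End EntrywiseOrder.

Lemma scalemx_exp (R : comPzRingType) k (c : R) (M : 'M[R]_k) m :
  (c *: M) ^+ m = c ^+ m *: M ^+ m.
Proof.
elim: m => [|m IH]; first by rewrite !expr0 scale1r.
by rewrite !exprS -!mulmxE IH -scalemxAl -scalemxAr scalerA.
Qed.

Lemma diag_invsqrt_mulE (R : rcfType) k (x : 'I_k -> R) (M : 'M[R]_k) a b :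
  (diag_invsqrt x *m M *m diag_invsqrt x) a b =
  (Num.sqrt (x a))^-1 * M a b * (Num.sqrt (x b))^-1.
Proof. by rewrite /diag_invsqrt mul_mx_diag mxE mul_diag_mx !mxE. Qed.

Lemma invsqrt_ge0 (R : rcfType) (x : R) : 0 <= (Num.sqrt x)^-1.
Proof. by rewrite invr_ge0 sqrtr_ge0. Qed.

Lemma invsqrt_le1 (R : rcfType) (x : R) : 1 <= x -> (Num.sqrt x)^-1 <= 1.
Proof.
move=> x_ge1; rewrite invf_le1 ?sqrtr_gt0 ?(lt_le_trans ltr01) //.
by rewrite -(sqrtr1 R) ler_sqrt // (le_trans ler01).
Qed.

Lemma invsqrt_succ_le (R : rcfType) (x : R) :
  0 < x -> (Num.sqrt (x + 1))^-1 <= (Num.sqrt x)^-1.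
Proof.
move=> x_gt0; have x1_gt0 : 0 < x + 1 by rewrite addr_gt0.
by rewrite lef_pV2 ?posrE ?sqrtr_gt0 // ler_sqrt ?lerDl // ltW.
Qed.

Section Graph.
Variables (R : rcfType) (n : nat) (adj : rel 'I_n).
Hypotheses (adj_sym : symmetric adj) (adj_irr : irreflexive adj).

Local Notation ed := (@edge_of n adj).
Local Notation A := (adjmx R adj).
Local Notation NB := (NBmx R adj).
Local Notation Ah := (Ahat R adj).
Local Notation Bh := (Bhat R adj).
Local Notation Ct := (Ctilde R adj).
Local Notation dist_ge := (dist_ge adj).
Local Notation local_mx := (local_mx adj).

Definition tailmx : 'M[R]_(nE adj, n) := \matrix_(e, v) ((ed e).1 == v)%:R.
Definition headmx : 'M[R]_(nE adj, n) := \matrix_(e, v) ((ed e).2 == v)%:R.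
Definition nb_lift (M : 'M[R]_n) : 'M[R]_(nE adj) :=
  \matrix_(e, g) (NB e g * M (ed e).2 (ed g).2).

Definition line_local (N : 'M[R]_(nE adj)) : Prop :=
  forall e g, N e g != 0 -> e = g \/ (ed g).1 = (ed e).2.

Lemma edge_adj e : adj (ed e).1 (ed e).2.
Proof. by rewrite /edge_of; case: (enum_val e). Qed.

Lemma edge_neq e : (ed e).1 != (ed e).2.
Proof. by apply: contraTneq (edge_adj e) => ->; rewrite adj_irr. Qed.

Lemma sum_out_edges (F : 'I_n -> R) a :
  \sum_e ((ed e).1 == a)%:R * F (ed e).2 = \sum_b (adj a b)%:R * F b.
Proof.
pose G (p : 'I_n * 'I_n) := (p.1 == a)%:R * F p.2.
transitivity (\sum_(x : dedge adj) G (val x)).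
  by rewrite (big_enum_val (fun x : dedge adj => G (val x))).
transitivity (\sum_(p | adj p.1 p.2) G p).
  rewrite [RHS](reindex_omap (val : dedge adj -> _) insub) /=; last first.
    by move=> p adj_p; rewrite insubT.
  by apply: eq_bigl => -[p adj_p] /=; rewrite insubT /= adj_p eqxx.
rewrite big_mkcond /=.
rewrite -(pair_big xpredT xpredT (fun u b => if adj u b then G (u, b) else 0)) /=.
rewrite (bigD1 a) //= [X in _ + X]big1 ?addr0; last first.
  by move=> u /negbTE ua; apply: big1 => b _; rewrite /G /= ua mul0r if_same.
apply: eq_bigr => b _; rewrite /G /= eqxx mul1r.
by case: (adj a b); rewrite ?mul1r ?mul0r.
Qed.

Lemma sum_succ_edges e (F : 'I_n -> R) :
  \sum_g NB e g * F (ed g).2 = \sum_b (adj (ed e).2 b && ((ed e).1 != b))%:R * F b.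
Proof.
transitivity (\sum_g ((ed g).1 == (ed e).2)%:R *
                     (((ed e).1 != (ed g).2)%:R * F (ed g).2)).
  by apply: eq_bigr => g _; rewrite mxE eq_sym mulrA -natrM mulnb.
rewrite (sum_out_edges (fun b => ((ed e).1 != b)%:R * F b)).
by apply: eq_bigr => b _; rewrite mulrA -natrM mulnb.
Qed.

Lemma sum_adj v : \sum_b (adj v b)%:R = (degree adj v)%:R :> R.
Proof.
rewrite /degree -sum1_card natr_sum [RHS]big_mkcond /=.
by apply: eq_bigr => b _; rewrite inE; case: (adj v b).
Qed.

Lemma degree_gt0 a b : adj a b -> (0 < degree adj a)%N.
Proof. by move=> ab; rewrite /degree card_gt0; apply/set0Pn; exists b; rewrite inE. Qed.

Lemma NBdegE e : NBdeg R e + 1 = (degree adj (ed e).2)%:R :> R.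
Proof.
rewrite /NBdeg -sum_adj.
rewrite (eq_bigr _ (fun g _ => esym (mulr1 (NB e g)))) (sum_succ_edges e (fun=> 1)).
rewrite [RHS](bigD1 (ed e).1) //= (bigD1 (ed e).1) //= eqxx andbF mul0r add0r.
rewrite adj_sym edge_adj addrC; congr (_ + _); apply: eq_bigr => b.
by rewrite eq_sym => /negbTE ->; rewrite andbT mulr1.
Qed.

Lemma AhatE a b :
  Ah a b = (Num.sqrt ((degree adj a)%:R + 1))^-1 * (A + 1%:M) a b *
           (Num.sqrt ((degree adj b)%:R + 1))^-1.
Proof. by rewrite /Ahat diag_invsqrt_mulE /degmx !mxE !eqxx !mulr1n. Qed.

Lemma BhatE e f :
  Bh e f = (Num.sqrt (degree adj (ed e).2)%:R)^-1 * (NB + 1%:M) e f *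
           (Num.sqrt (degree adj (ed f).2)%:R)^-1.
Proof. by rewrite /Bhat diag_invsqrt_mulE !NBdegE. Qed.

Lemma adjmx1E a b : (A + 1%:M) a b = (adj a b || (a == b))%:R.
Proof.
rewrite !mxE; case: (eqVneq a b) => [->|_]; first by rewrite adj_irr orbT add0r.
by rewrite addr0 orbF.
Qed.

Lemma adjmx_local : local_mx id A.
Proof.
move=> a b /=; rewrite mxE.
by case: (boolP (adj a b)) => [|_]; [right|rewrite eqxx].
Qed.

Lemma adjmx1_local : local_mx id (A + 1%:M).
Proof.
move=> a b /=; rewrite adjmx1E; case: (boolP (adj a b)) => [|_ /=]; first by right.
by have [->|_] := eqVneq a b; [left|rewrite eqxx].
Qed.

Lemma Ahat_local : local_mx id Ah.
Proof.
move=> a b; rewrite AhatE !mulf_eq0 !negb_or => /andP[/andP[_ ab] _].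
exact: adjmx1_local.
Qed.

Lemma Ahat_ge0 : nnegmx Ah.
Proof. by move=> a b; rewrite AhatE adjmx1E !mulr_ge0 ?invsqrt_ge0. Qed.

Lemma Ahat_le1 a b : Ah a b <= 1.
Proof.
rewrite AhatE adjmx1E; apply: mulr_ile1; rewrite ?mulr_ge0 ?invsqrt_ge0 //.
  by apply: mulr_ile1; rewrite ?invsqrt_ge0 ?invsqrt_le1 ?lerDr //; case: (_ || _).
by rewrite invsqrt_le1 ?lerDr.
Qed.

Lemma Bhat_ge0 : nnegmx Bh.
Proof. by move=> e f; rewrite BhatE !mxE !mulr_ge0 ?invsqrt_ge0 ?addr_ge0. Qed.

Lemma nb_lift_Ahat_ge0 : nnegmx (nb_lift Ah).
Proof. by move=> e g; rewrite mxE mulr_ge0 ?Ahat_ge0 // mxE. Qed.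

Lemma nb_lift_Ahat_le : lemx (nb_lift Ah) Bh.
Proof.
move=> e g; rewrite mxE [NB e g]mxE.
case: andP => [[/eqP e2g1 e1g2]|_]; last by rewrite mul0r Bhat_ge0.
have deg_gt0 f : (0 < degree adj (ed f).2)%N.
  by rewrite (@degree_gt0 _ (ed f).1) // adj_sym edge_adj.
have A1_ge0 : 0 <= (A + 1%:M) (ed e).2 (ed g).2 by rewrite adjmx1E.
have A1_le : (A + 1%:M) (ed e).2 (ed g).2 <= (NB + 1%:M) e g.
  rewrite adjmx1E !mxE e2g1 eqxx e1g2 /=; apply: (@le_trans _ _ 1).
    by case: (_ || _).
  by rewrite lerDl.
rewrite mul1r AhatE BhatE; apply: ler_pM; rewrite ?mulr_ge0 ?invsqrt_ge0 //.
  by apply: ler_pM; rewrite ?invsqrt_ge0 ?invsqrt_succ_le ?ltr0n.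
by rewrite invsqrt_succ_le ?ltr0n.
Qed.

Section LineGraphLocal.
Variable N : 'M[R]_(nE adj).
Hypothesis N_line : line_local N.

Lemma head_local : local_mx (fun e => (ed e).2) N.
Proof. by move=> e g /N_line[->|<-]; [left|right; apply: edge_adj]. Qed.

Lemma mxpow_head_eq0 m e f : dist_ge m.+1 (ed e).2 (ed f).2 -> (N ^+ m) e f = 0.
Proof. exact: mxpow_local_eq0 head_local m e f. Qed.

Lemma mxpow_tail_eq0 m e f :
  dist_ge m (ed e).2 (ed f).1 -> (ed e).1 != (ed f).1 -> (N ^+ m) e f = 0.
Proof.
elim: m f => [|m IH] f far ef.
  by rewrite expr0 mxE; case: eqP => // e_f; rewrite e_f eqxx in ef.
rewrite exprSr -mulmxE mxE big1 // => g _.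
have [->|/N_line[gf|f1g2]] := eqVneq (N g f) 0; first by rewrite mulr0.
  by rewrite gf IH ?mul0r //; apply: dist_geW far.
by rewrite mxpow_head_eq0 ?mul0r // -f1g2.
Qed.

Lemma mxpow_headmx_eq0 m e v : dist_ge m.+1 (ed e).2 v -> (N ^+ m *m headmx) e v = 0.
Proof.
move=> far; rewrite mxE big1 // => f _; rewrite mxE.
by case: eqP => [fv|_]; rewrite ?mulr0 // mxpow_head_eq0 ?mul0r ?fv.
Qed.

Lemma mxpow_tailmx_eq0 m e v :
  dist_ge m (ed e).2 v -> (ed e).1 != v -> (N ^+ m *m tailmx) e v = 0.
Proof.
move=> far ev; rewrite mxE big1 // => f _; rewrite mxE.
by case: eqP => [fv|_]; rewrite ?mulr0 // mxpow_tail_eq0 ?mul0r ?fv.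
Qed.

Lemma tailmx_pow_tailmx_eq0 m j i :
  dist_ge m.+1 j i -> (tailmx^T *m (N ^+ m *m tailmx)) j i = 0.
Proof.
move=> far; rewrite mxE big1 // => e _; rewrite [_^T _ _]mxE [tailmx _ _]mxE.
case: eqP => [e1j|_]; last by rewrite mul0r.
rewrite mxpow_tailmx_eq0 ?mulr0 ?e1j ?(dist_ge_neq far) //.
by apply: dist_ge_adj far; rewrite -e1j edge_adj.
Qed.

Lemma headmx_pow_headmx_eq0 m j i :
  dist_ge m.+1 j i -> (headmx^T *m (N ^+ m *m headmx)) j i = 0.
Proof.
move=> far; rewrite mxE big1 // => e _; rewrite [_^T _ _]mxE [headmx _ _]mxE.
case: eqP => [e2j|_]; last by rewrite mul0r.
by rewrite mxpow_headmx_eq0 ?mulr0 ?e2j.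
Qed.

Lemma headmx_pow_tailmx_eq0 m j i :
  dist_ge m.+2 j i -> (headmx^T *m (N ^+ m.+1 *m tailmx)) j i = 0.
Proof.
move=> far; rewrite mxE big1 // => e _; rewrite [_^T _ _]mxE [headmx _ _]mxE.
case: eqP => [e2j|_]; last by rewrite mul0r.
rewrite mxpow_tailmx_eq0 ?mulr0 ?e2j //; first exact: dist_geW far.
apply: contraNneq (dist_ge_nadj far) => e1i.
by rewrite adj_sym -e1i -e2j edge_adj.
Qed.

End LineGraphLocal.

Section Lift.
Variables (M : 'M[R]_n) (N : 'M[R]_(nE adj)).
Hypothesis M_local : local_mx id M.
Hypothesis N_offdiag : forall e g, e != g -> N e g = nb_lift M e g.

Lemma nb_lift_line_local : line_local N.
Proof.
move=> e g; have [->|eg] := eqVneq e g; first by left.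
rewrite N_offdiag // !mxE; have [e2g1 _|_] := eqVneq (ed e).2 (ed g).1; first by right.
by rewrite /= mul0r eqxx.
Qed.

(* The hypotheses force walks of length m from the head of e to v to be
   geodesics avoiding the tail of e, so they never use the diagonal of N nor a
   backtracking step. *)
Lemma mxpow_lift_headmx m e v :
    dist_ge m (ed e).2 v -> dist_ge m.+1 (ed e).1 v ->
  (N ^+ m *m headmx) e v = (M ^+ m) (ed e).2 v.
Proof.
elim: m e => [|m IH] e far2 far1; first by rewrite !expr0 mul1mx !mxE.
rewrite exprS -mulmxE -mulmxA mxE (bigD1 e) //= mxpow_headmx_eq0 ?mulr0 ?add0r //;
  last exact: nb_lift_line_local.
transitivity (\sum_g NB e g * (M (ed e).2 (ed g).2 * (M ^+ m) (ed g).2 v)).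
  rewrite [RHS](bigD1 e) //= [NB e e]mxE eq_sym (negbTE (edge_neq e)) mul0r add0r.
  apply: eq_bigr => g ge; rewrite N_offdiag 1?eq_sym //.
  rewrite [nb_lift M e g]mxE -mulrA [NB e g]mxE.
  case: eqP => [e2g1|_]; last by rewrite !mul0r.
  rewrite IH // -?e2g1 //; apply: dist_ge_adj far2.
  by rewrite e2g1 edge_adj.
rewrite (sum_succ_edges e (fun b => M (ed e).2 b * (M ^+ m) b v)).
rewrite (mxpow_local_step M_local far2); apply: eq_bigr => b _.
have [<-|_] := eqVneq (ed e).1 b; last by rewrite andbT.
by rewrite andbF mul0r (mxpow_local_eq0 M_local) ?mulr0 //; apply: dist_geW far1.
Qed.

Lemma tailmx_lift_headmx m j i :
  dist_ge m.+1 j i -> (tailmx^T *m (N ^+ m *m headmx)) j i = (A *m M ^+ m) j i.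
Proof.
move=> far; rewrite mxE.
transitivity (\sum_e ((ed e).1 == j)%:R * (M ^+ m) (ed e).2 i).
  apply: eq_bigr => e _; rewrite [tailmx^T _ _]mxE [tailmx _ _]mxE.
  case: eqP => [e1j|_]; last by rewrite !mul0r.
  have far2 : dist_ge m (ed e).2 i by apply: dist_ge_adj far; rewrite -e1j edge_adj.
  by rewrite mxpow_lift_headmx // e1j.
rewrite (sum_out_edges (fun b => (M ^+ m) b i)) [RHS]mxE; apply: eq_bigr => b _.
by rewrite mxE.
Qed.

End Lift.

Lemma tailmx_ge0 : nnegmx tailmx.
Proof. by move=> e v; rewrite mxE. Qed.

Lemma headmx_ge0 : nnegmx headmx.
Proof. by move=> e v; rewrite mxE. Qed.

Lemma Ctilde_incidence : Ct = 2%:R *: (tailmx + headmx).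
Proof.
apply/matrixP => e v; rewrite !mxE /Cpair /=.
have [e1v|_] := eqVneq (ed e).1 v; have [e2v|_] := eqVneq (ed e).2 v => //=.
  by move: (edge_neq e); rewrite e1v e2v eqxx.
all: by rewrite ?addr0 ?add0r ?mulr1 ?mulr0.
Qed.

Lemma tailmx_le_Ctilde : lemx tailmx Ct.
Proof.
move=> e v; rewrite Ctilde_incidence !mxE mulr_natl mulr2n -addrA lerDl.
by rewrite !addr_ge0.
Qed.

Lemma headmx_le_Ctilde : lemx headmx Ct.
Proof.
move=> e v; rewrite Ctilde_incidence !mxE mulr_natl mulr2n addrCA addrA lerDr.
by rewrite !addr_ge0.
Qed.

Lemma Ahat_pow_le m j i :
  dist_ge m.+1 j i -> (Ah ^+ m.+1) j i <= (Ct^T *m Bh ^+ m *m Ct) j i.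
Proof.
move=> far.
have lift := tailmx_lift_headmx Ahat_local (N := nb_lift Ah) (fun _ _ _ => erefl) far.
apply: (@le_trans _ _ ((A *m Ah ^+ m) j i)).
  rewrite (mxpow_local_step Ahat_local far) mxE; apply: ler_sum => b _.
  rewrite [A j b]mxE; case: (adj j b); rewrite ?mul0r // !mul1r ler_piMl ?Ahat_le1 //.
  exact: nnegmx_exp Ahat_ge0 _ _.
rewrite -lift -mulmxA; apply: lemx_mul.
- by move=> e v; rewrite mxE tailmx_ge0.
- exact: lemx_trmx tailmx_le_Ctilde.
- exact: nnegmx_mul (nnegmx_exp _ nb_lift_Ahat_ge0) headmx_ge0.
- apply: lemx_mul headmx_ge0 headmx_le_Ctilde; first exact: nnegmx_exp _ nb_lift_Ahat_ge0.
  exact: lemx_exp nb_lift_Ahat_ge0 nb_lift_Ahat_le.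
Qed.

Lemma headmx_tailmx : headmx^T *m tailmx = A.
Proof.
apply/matrixP => j i; rewrite !mxE.
transitivity (\sum_e ((ed e).1 == i)%:R * ((ed e).2 == j)%:R : R).
  by apply: eq_bigr => e _; rewrite !mxE mulrC.
rewrite (sum_out_edges (fun b => (b == j)%:R : R)) (bigD1 j) //= eqxx mulr1 adj_sym.
by rewrite big1 ?addr0 // => b /negbTE ->; rewrite mulr0.
Qed.

Lemma NB1_offdiag e g : e != g -> (NB + 1%:M) e g = nb_lift A e g.
Proof.
move=> eg; rewrite !mxE (negbTE eg) addr0.
case: eqP => [e2g1|_]; last by rewrite !mul0r.
by rewrite e2g1 edge_adj mulr1.
Qed.

Lemma Ctilde_NBpow_Ctilde m j i :
    dist_ge m.+1 j i ->
  (Ct^T *m (NB + 1%:M) ^+ m *m Ct) j i = 4 * ((A ^+ m.+1) j i + (m == 0)%:R * A j i).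
Proof.
move=> far; have NB1_line := nb_lift_line_local NB1_offdiag.
rewrite Ctilde_incidence !linearZ /= -!scalemxAl scalerA -natrM mxE -mulmxA.
have addE (X Y Z W : 'M[R]_n) : (X + Y + (Z + W)) j i = X j i + Y j i + (Z j i + W j i).
  by rewrite !mxE.
rewrite linearD /= !mulmxDl !mulmxDr addE.
rewrite (tailmx_lift_headmx adjmx_local NB1_offdiag far) mulmxE -exprS.
rewrite tailmx_pow_tailmx_eq0 ?headmx_pow_headmx_eq0 // add0r addr0.
case: m far => [|m] far; last by rewrite (headmx_pow_tailmx_eq0 NB1_line far) mul0r.
by rewrite expr0 mul1mx headmx_tailmx expr1 mul1r.
Qed.

Lemma Bhat_regular d : regular adj d -> Bh = d%:R^-1 *: (NB + 1%:M).
Proof.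
move=> reg; apply/matrixP => e f; rewrite BhatE [RHS]mxE !reg.
by rewrite mulrAC -invfM -expr2 sqr_sqrtr ?ler0n.
Qed.

Lemma Ahat_regular d : regular adj d -> Ah = d.+1%:R^-1 *: (A + 1%:M).
Proof.
move=> reg; apply/matrixP => a b; rewrite AhatE [RHS]mxE !reg natr1.
by rewrite mulrAC -invfM -expr2 sqr_sqrtr ?ler0n.
Qed.

Lemma adjmx1_pow m a b : dist_ge m a b -> ((A + 1%:M) ^+ m) a b = (A ^+ m) a b.
Proof.
move=> far; rewrite idmxE exprD1n summxE big_ord_recr /= binn mulmxnE mulr1n.
rewrite big1 ?add0r // => k _; rewrite mulmxnE (mxpow_local_eq0 adjmx_local) ?mul0rn //.
exact: dist_geW far.
Qed.

Lemma Ctilde_Bhat_pow_regular d m j i :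
    regular adj d -> (0 < d)%N -> dist_ge m.+1 j i ->
  (Ct^T *m Bh ^+ m *m Ct) j i =
  (if m == 0 then 8 else 4)%:R * d%:R * (A ^+ m.+1) j i / d%:R ^+ m.+1.
Proof.
move=> reg d_gt0 far; have d_neq0 : d%:R != 0 :> R by rewrite pnatr_eq0 -lt0n.
rewrite (Bhat_regular reg) scalemx_exp -scalemxAr -scalemxAl mxE.
rewrite Ctilde_NBpow_Ctilde // exprVn.
case: m {far} => [|m] /=; first by rewrite !expr1 expr0 invr1 !mul1r; field.
rewrite mul0r addr0 [X in _ / X]exprS; have := expf_neq0 m.+1 d_neq0.
move: (d%:R ^+ m.+1) => D D_neq0. (* [field] needs constant exponents *)
by field; rewrite D_neq0 d_neq0.
Qed.

Lemma Ahat_pow_regular d m j i :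
  regular adj d -> dist_ge m j i -> (Ah ^+ m) j i = (A ^+ m) j i / d.+1%:R ^+ m.
Proof.
by move=> reg far; rewrite (Ahat_regular reg) scalemx_exp mxE adjmx1_pow // exprVn mulrC.
Qed.

End Graph.

Theorem theorem1 (R : rcfType) (n : nat) (adj : rel 'I_n) :
  simple_graph adj ->
  forall (i j : 'I_n) (T : nat), (1 <= T)%N -> at_distance adj i j T ->
    ((Ahat R adj ^+ T) j i <=
       ((Ctilde R adj)^T *m (Bhat R adj ^+ T.-1) *m Ctilde R adj) j i)
    /\
    (forall d : nat, regular adj d ->
       ((Ctilde R adj)^T *m (Bhat R adj ^+ T.-1) *m Ctilde R adj) j i
         = (if T == 1%N then 8 else 4)%:R * d%:R * (adjmx R adj ^+ T) j i
             / d%:R ^+ T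
       /\
       (Ahat R adj ^+ T) j i = (adjmx R adj ^+ T) j i / (d.+1)%:R ^+ T).
Proof.
move=> [adj_sym adj_irr] i j [//|m] _ [walk_ij far_ij].
have {}adj_irr : irreflexive adj := fun u => negbTE (adj_irr u).
have far : dist_ge adj m.+1 j i := dist_ge_sym adj_sym far_ij.
split; first exact: Ahat_pow_le.
move=> d reg; split; last exact: Ahat_pow_regular.
apply: Ctilde_Bhat_pow_regular => //.
by case/existsP: walk_ij => w /andP[iw _]; rewrite -(reg i) (degree_gt0 iw).
Qed.
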